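(* In each of the categories $\mathsf{Top}$, $\mathsf{Haus}$, $\mathsf{Top}_1$ and $\mathsf{Top}_0$, an object is finitely generated if, and only if, it is finitely small with respect to monomorphisms; and an object is finitely generated with respect to open embeddings if, and only if, it is finitely small with respect to open embeddings.
   Context: $\mathsf{Haus}$, $\mathsf{Top}_1$, $\mathsf{Top}_0$ are the full subcategories of $\mathsf{Top}$ of Hausdorff, T$_1$- and T$_0$-spaces. An open embedding is an injective continuous open map. For a class $\mathcal{M}$ of monomorphisms of a category $\mathcal{C}$, an object $X$ is finitely generated w.r.t. $\mathcal{M}$ if for every directed diagram $(Z_i)_{i\in I}$ (indexed by a directed poset, i.e. every finite subset has an upper bound) with connecting morphisms $z_{i,j}$ in $\mathcal{M}$ and colimit cocone $c_i:Z_i\to Z$ in $\mathcal{C}$, every morphism $f:X\to Z$ factorizes as $f=c_i\cdot g$ for some $i$ and $g:X\to Z_i$, and if also $f=c_i\cdot g'$ then $z_{i,j}\cdot g=z_{i,j}\cdot g'$ for some connecting morphism $z_{i,j}$. ''Finitely generated'' means finitely generated w.r.t. all monomorphisms. $X$ is finitely small w.r.t. $\mathcal{M}$ if the same is required only for continuous chains with connecting morphisms in $\mathcal{M}$, i.e. diagrams $D:\alpha\to\mathcal{C}$ indexed by a limit ordinal $\alpha$ such that for every limit ordinal $j<\alpha$, $D(j)$ is the colimit of the restriction of $D$ to $\{i:i<j\}$. *)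

From HB Require Import structures.
From mathcomp Require Import all_boot all_order.
From mathcomp Require Import all_classical topology.
From Stdlib Require List.
Set Implicit Arguments. Unset Strict Implicit. Unset Printing Implicit Defensive.
Local Open Scope classical_set_scope.

(** The four categories: full subcategories of Top. *)
Inductive spcat := TopC | HausC | Top1C | Top0C.

Definition obj (C : spcat) (X : topologicalType) : Prop :=
  match C with
  | TopC => True
  | HausC => hausdorff_space X
  | Top1C => accessible_space X
  | Top0C => kolmogorov_space X
  end.

Definition morclass := forall (A B : topologicalType), (A -> B) -> Prop.

Definition mono (C : spcat) : morclass := fun A B f =>
  continuous f /\
  forall (D : topologicalType), obj C D -> forall g h : D -> A,
    continuous g -> continuous h -> f \o g = f \o h -> g = h.

Definition open_embedding : morclass := fun A B f =>
  [/\ injective f, continuous f & forall U : set A, open U -> open (f @` U)].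

Definition diagram (C : spcat) (M : morclass) (I : Type) (le : I -> I -> Prop)
  (Z : I -> topologicalType) (z : forall i j, le i j -> Z i -> Z j) : Prop :=
  [/\ forall i, obj C (Z i),
      forall i j (h : le i j), continuous (z i j h) /\ M _ _ (z i j h),
      forall i (h : le i i), z i i h = id
    & forall i j k (h1 : le i j) (h2 : le j k) (h3 : le i k),
        z j k h2 \o z i j h1 = z i k h3].

Definition is_colimit (C : spcat) (I : Type) (le : I -> I -> Prop)
  (Z : I -> topologicalType) (z : forall i j, le i j -> Z i -> Z j)
  (W : topologicalType) (c : forall i, Z i -> W) : Prop :=
  [/\ obj C W,
      forall i, continuous (c i),
      forall i j (h : le i j), c j \o z i j h = c i
    & forall (V : topologicalType), obj C V ->
      forall d : forall i, Z i -> V,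
        (forall i, continuous (d i)) ->
        (forall i j (h : le i j), d j \o z i j h = d i) ->
        exists! u : W -> V, continuous u /\ forall i, u \o c i = d i].

Definition directed_poset (I : Type) (le : I -> I -> Prop) : Prop :=
  [/\ forall i, le i i,
      forall i j, le i j -> le j i -> i = j,
      forall i j k, le i j -> le j k -> le i k
    & forall l : list I, exists k, forall i, List.In i l -> le i k].

Definition fg_condition (I : Type) (le : I -> I -> Prop)
  (Z : I -> topologicalType) (z : forall i j, le i j -> Z i -> Z j)
  (W : topologicalType) (c : forall i, Z i -> W) (X : topologicalType) : Prop :=
  forall f : X -> W, continuous f ->
    (exists i (g : X -> Z i), continuous g /\ f = c i \o g) /\
    (forall i (g g' : X -> Z i), continuous g -> continuous g' ->
       f = c i \o g -> f = c i \o g' ->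
       exists j (h : le i j), z i j h \o g = z i j h \o g').

Definition fin_generated (C : spcat) (M : morclass) (X : topologicalType) : Prop :=
  forall (I : Type) (le : I -> I -> Prop)
    (Z : I -> topologicalType) (z : forall i j, le i j -> Z i -> Z j)
    (W : topologicalType) (c : forall i, Z i -> W),
    directed_poset le -> diagram C M z -> is_colimit C z c ->
    fg_condition z c X.

(** A limit ordinal alpha, represented (up to isomorphism) as the
    well-ordered set of ordinals below it: a nonempty well-order
    without a greatest element. *)
Definition strict (I : Type) (le : I -> I -> Prop) (i j : I) := le i j /\ i <> j.

Definition limit_ordinal_type (I : Type) (le : I -> I -> Prop) : Prop :=
  (forall i, le i i) /\
  (forall i j, le i j -> le j i -> i = j) /\
  (forall i j k, le i j -> le j k -> le i k) /\
  (forall i j, le i j \/ le j i) /\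
  well_founded (strict le) /\
  (exists i : I, True) /\
  (forall i, exists j, strict le i j).

(** j is a limit ordinal (nonzero, not a successor) inside the chain. *)
Definition is_limit_elt (I : Type) (le : I -> I -> Prop) (j : I) : Prop :=
  (exists i, strict le i j) /\
  (forall i, strict le i j -> exists k, strict le i k /\ strict le k j).

Definition below (I : Type) (le : I -> I -> Prop) (j : I) := {i : I | strict le i j}.
Definition le_below (I : Type) (le : I -> I -> Prop) (j : I)
  (a b : below le j) : Prop := le (proj1_sig a) (proj1_sig b).

Definition continuous_chain (C : spcat) (I : Type) (le : I -> I -> Prop)
  (Z : I -> topologicalType) (z : forall i j, le i j -> Z i -> Z j) : Prop :=
  forall j, is_limit_elt le j ->
    is_colimit C
      (I := below le j) (le := @le_below I le j)
      (Z := fun a => Z (proj1_sig a))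
      (fun a b (h : le_below a b) => z (proj1_sig a) (proj1_sig b) h)
      (W := Z j)
      (fun a => z (proj1_sig a) j (proj1 (proj2_sig a))).

Definition fin_small (C : spcat) (M : morclass) (X : topologicalType) : Prop :=
  forall (I : Type) (le : I -> I -> Prop)
    (Z : I -> topologicalType) (z : forall i j, le i j -> Z i -> Z j)
    (W : topologicalType) (c : forall i, Z i -> W),
    limit_ordinal_type le -> diagram C M z -> continuous_chain C z ->
    is_colimit C z c ->
    fg_condition z c X.

(* Finitely generated implies finitely small because a limit ordinal is a
   directed poset.  For the converse we determine the finitely small spaces.

   With respect to any class containing the open embeddings, a finitely small
   space X is compact.  Otherwise well-order an open cover of X without finite
   subcover and take the least index whose initial segment, together with
   finitely many members of the cover, covers X: the unions of the shorter
   initial segments with these finitely many members form a continuous chain of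
   proper open subspaces with colimit X, and the identity of X factors through
   none of them.

   The colimit in Top of a directed diagram of injections is their union with
   the final topology.  It lies in the subcategory when the injections are open
   embeddings, and it is T1 whenever the stages are; then it is also the colimit
   there.  A map from a compact space into it lands in a single stage as soon as
   the preimages of the stages are open, which holds for open embeddings and for
   discrete spaces.

   With respect to monomorphisms, i.e. continuous injections, chains of coarser
   and coarser topologies on a fixed set give the remaining restrictions: in Top
   every point of X is open, in Top_1 a compact X is finite, and in Haus and
   Top_0 the colimit identifies two points, so only the empty space is finitely
   small there.  Compact discrete and empty spaces are finitely generated. *)

From HB Require Import structures.
From mathcomp Require Import all_boot all_order.
From mathcomp Require Import all_classical topology wochoice.
Set Implicit Arguments. Unset Strict Implicit. Unset Printing Implicit Defensive.
Local Open Scope classical_set_scope.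

(** * Topologies given by their open sets *)

Record open_axioms (Y : Type) (op : set (set Y)) : Prop := OpenAxioms {
  op_setT : op setT;
  op_setI : forall A B, op A -> op B -> op (A `&` B);
  op_bigcup : forall (I : Type) (f : I -> set Y),
    (forall i, op (f i)) -> op (\bigcup_i f i) }.

Definition topology_of (Y : Type) (op : set (set Y)) (_ : open_axioms op) : Type := Y.
HB.instance Definition _ Y op H := gen_eqMixin (@topology_of Y op H).
HB.instance Definition _ Y op H := gen_choiceMixin (@topology_of Y op H).
HB.instance Definition _ Y op H := isOpenTopological.Build (@topology_of Y op H)
  (op_setT H) (op_setI H) (@op_bigcup _ _ H).

Lemma sval_inj (A : Type) (P : A -> Prop) : injective (@sval A P).
Proof. by move=> a b; apply: eq_sig_hprop => x; exact: Prop_irrelevance. Qed.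

Lemma open_axioms_bigcap (J Y : Type) (op : J -> set (set Y)) :
  (forall n, open_axioms (op n)) -> open_axioms (fun U => forall n, op n U).
Proof.
move=> H; split=> [n|A B oA oB n|I f hf n]; first exact: (op_setT (H n)).
  exact: (op_setI (H n)).
by apply: (op_bigcup (H n)) => i; exact: hf.
Qed.

Lemma open_of_open_nbhs (T : topologicalType) (A : set T) :
  (forall x, A x -> exists2 B, open_nbhs x B & B `<=` A) -> open A.
Proof.
move=> HA; rewrite openE => x /HA [B xB BA].
by apply: filterS BA _; exact: open_nbhs_nbhs.
Qed.

(** * Separation axioms and monomorphisms *)

Definition open_separated (T : topologicalType) (x y : T) :=
  exists A B : set T, [/\ open A, open B, A x, B y & A `&` B = set0].

Lemma open_separated_sym (T : topologicalType) (x y : T) :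
  open_separated x y -> open_separated y x.
Proof. by move=> [A [B [oA oB Ax By AB]]]; exists B, A; rewrite setIC. Qed.

Lemma hausdorffP (T : topologicalType) :
  hausdorff_space T <-> forall x y : T, x <> y -> open_separated x y.
Proof.
rewrite open_hausdorff; split=> [H x y /eqP /H|H x y /eqP /H [A [B]]].
  move=> [[A B] /= [xA yB] [oA oB /eqP AB]].
  by exists A, B; split => //; exact: set_mem.
by move=> [oA oB Ax By AB]; exists (A, B); split=> //=; rewrite ?inE //; apply/eqP.
Qed.

Lemma accessibleP (T : topologicalType) : accessible_space T <->
  forall x y : T, x <> y -> exists A : set T, [/\ open A, A x & ~ A y].
Proof.
split=> [H x y /eqP /H [A [oA]]|H x y /eqP /H [A [oA Ax Ay]]].
  by rewrite !inE => Ax Ay; exists A.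
by exists A; rewrite !inE.
Qed.

Lemma accessible_of_cofinite (T : topologicalType) :
  (forall U : set T, finite_set (~` U) -> open U) -> accessible_space T.
Proof.
move=> cofin; apply/accessibleP => x x' xx'; exists (~` [set x']).
split=> [|//|/(_ erefl)//]; apply: cofin; rewrite setCK; exact: finite_set1.
Qed.

Lemma kolmogorovP (T : topologicalType) : kolmogorov_space T <->
  forall x y : T, x <> y ->
    exists A : set T, open A /\ (A x /\ ~ A y \/ A y /\ ~ A x).
Proof.
split=> [H x y /eqP /H [A]|H x y /eqP /H [A [oA xyA]]].
  rewrite !inE /= => -[[]|[]]; rewrite nbhsE => -[B [oB Bx] BA] nA.
  - by exists B; split=> //; left; split=> // /BA.
  - by exists B; split=> //; right; split=> // /BA.
exists A; rewrite !inE.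
by case: xyA => -[Ax nAy]; [left|right]; split=> //; exact: open_nbhs_nbhs.
Qed.

Lemma hausdorff_obj C (T : topologicalType) : hausdorff_space T -> obj C T.
Proof.
case: C => //= hT; first exact: hausdorff_accessible.
exact/accessible_kolmogorov/hausdorff_accessible.
Qed.

Lemma monoP C (A B : topologicalType) (f : A -> B) :
  mono C f <-> continuous f /\ injective f.
Proof.
split=> [[cf fmono]|[cf finj]]; last first.
  split=> // D _ g h _ _ fgh; apply: funext => x; apply: finj.
  exact: (congr1 (fun k => k x) fgh).
split=> // a b fab.
have /(congr1 (fun k => k tt)) // :
    (fun=> a) = (fun=> b) :> (discrete_topology unit -> A).
apply: fmono; [exact/hausdorff_obj/discrete_hausdorff|exact: cst_continuous..|].
by apply: funext => u /=; rewrite fab.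
Qed.

Lemma open_embedding_mono C (A B : topologicalType) (f : A -> B) :
  open_embedding f -> mono C f.
Proof. by case=> finj cf _; apply/monoP. Qed.

Lemma obj_continuous_inj C (S T : topologicalType) (e : S -> T) :
  continuous e -> injective e -> obj C T -> obj C S.
Proof.
move=> /continuousP ce ie; have ne x y : x <> y -> e x <> e y by move=> + /ie.
case: C => //=.
- rewrite !hausdorffP => HT x y /ne /HT [A [B [oA oB Ax By AB]]].
  exists (e @^-1` A), (e @^-1` B); split => //; [exact: ce..|].
  by rewrite -preimage_setI AB preimage_set0.
- rewrite !accessibleP => HT x y /ne /HT [A [oA Ax Ay]].
  by exists (e @^-1` A); split => //; exact: ce.
- rewrite !kolmogorovP => HT x y /ne /HT [A [oA exyA]].
  by exists (e @^-1` A); split => //; exact: ce.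
Qed.

Lemma open_embedding_comp_inj (A B D : topologicalType) (f : A -> B) (g : B -> D) :
  continuous f -> continuous g -> injective g -> open_embedding (g \o f) ->
  open_embedding f.
Proof.
move=> cf /continuousP cg ig [igf _ ogf]; split=> [x y /(congr1 g)/igf //|//|U oU].
have -> : f @` U = g @^-1` ((g \o f) @` U).
  apply/seteqP; split=> [_ [x Ux <-]|b [x Ux /ig <-]]; last by exists x.
  by exists x.
exact: cg (ogf _ oU).
Qed.

Section Subspaces.
Variable X : topologicalType.

Lemma open_embedding_val (A : set X) : open A -> open_embedding (val : A -> X).
Proof.
move=> oA; split; [exact: val_inj|exact: initial_continuous|].
move=> _ [V oV <-]; rewrite set_valE.
have -> : (val : A -> X) @` (val @^-1` V) = V `&` A.
  apply/seteqP; split=> [_ [a Va <-]|x [Vx Ax]]; first by split=> //; exact: set_valP.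
  by exists (exist _ x (mem_set Ax)).
exact: openI.
Qed.

Definition subset_incl (A B : set X) (AB : A `<=` B) : A -> B :=
  fun a => exist _ (val a) (mem_set (AB _ (set_valP a))).

Lemma open_embedding_subset_incl (A B : set X) (AB : A `<=` B) :
  open A -> open_embedding (subset_incl AB).
Proof.
move=> oA; have cincl : continuous (subset_incl AB).
  exact/continuous_comp_initial/initial_continuous.
apply: (@open_embedding_comp_inj _ _ _ _ (val : B -> X) cincl).
- exact: initial_continuous.
- exact: val_inj.
- exact: open_embedding_val.
Qed.

Lemma obj_subspace C (A : set X) : obj C X -> obj C A.
Proof. exact/obj_continuous_inj/val_inj/initial_continuous. Qed.

End Subspaces.

(** * Colimits *)

Lemma limit_ordinal_directed (I : Type) (le : I -> I -> Prop) :
  limit_ordinal_type le -> directed_poset le.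
Proof.
move=> [refl [anti [trans [tot [_ [[i0 _] _]]]]]]; split=> // l.
elim: l => [|a l [k Hk]]; first by exists i0.
have [ak|ka] := tot a k.
- by exists k => i /= [<-|/Hk].
- by exists a => i /= [<-|/Hk ik] //; exact: trans ik ka.
Qed.

Lemma fin_generated_small C M (X : topologicalType) :
  fin_generated C M X -> fin_small C M X.
Proof.
by move=> H I le Z z W c /limit_ordinal_directed lo D _; exact: H.
Qed.

Lemma empty_fin_generated C M (X : topologicalType) :
  (X -> False) -> fin_generated C M X.
Proof.
move=> X0 I le Z z W c [refl _ _ ub] _ _ f _; split.
- have [k _] := ub nil; exists k, (fun x => match X0 x with end).
  by split; [move=> x; case: (X0 x)|apply: funext => x; case: (X0 x)].
- by move=> i g g' _ _ _ _; exists i, (refl i); apply: funext => x; case: (X0 x).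
Qed.

Section FinalCocone.
Variables (I : Type) (le : I -> I -> Prop) (Z : I -> topologicalType).
Variables (z : forall i j, le i j -> Z i -> Z j) (W : topologicalType).
Variable c : forall i, Z i -> W.
Arguments z : clear implicits.
Arguments c : clear implicits.
Hypothesis c_surj : forall w, exists i a, w = c i a.

Lemma open_cocone_final :
  (forall i (U : set (Z i)), open U -> open (c i @` U)) ->
  forall U : set W, (forall i, open (c i @^-1` U)) -> open U.
Proof.
move=> c_open U cU; have -> : U = \bigcup_i (c i @` (c i @^-1` U)).
  apply/seteqP; split=> [w Uw|w [i _ [a Ua <-]] //].
  by have [i [a wE]] := c_surj w; exists i => //; exists a; rewrite /= -wE.
by apply: bigcup_open => i _; exact: c_open.
Qed.

Hypothesis c_cont : forall i, continuous (c i).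
Hypothesis c_cocone : forall i j (h : le i j), c j \o z i j h = c i.
Hypothesis c_eq : forall i j a b, c i a = c j b ->
  exists k (hi : le i k) (hj : le j k), z i k hi a = z j k hj b.

Lemma final_cocone_is_colimit C :
  obj C W -> (forall U : set W, (forall i, open (c i @^-1` U)) -> open U) ->
  is_colimit C z c.
Proof.
move=> oW c_final; split=> // V oV d dc dz.
have d_eq i j a b : c i a = c j b -> d i a = d j b.
  move=> /c_eq [k [hi [hj E]]].
  by rewrite -(dz _ _ hi) -(dz _ _ hj) /= E.
have /choice [p pE] : forall w, exists p : {i & Z i}, w = c (projT1 p) (projT2 p).
  by move=> w; have [i [a ->]] := c_surj w; exists (existT _ i a).
pose u w := d (projT1 (p w)) (projT2 (p w)).
have uc i a : u (c i a) = d i a by apply/esym/d_eq/pE.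
exists u; split.
- split=> [|i]; last by apply: funext => a /=; exact: uc.
  apply/continuousP => U oU; apply: c_final => i.
  have -> : c i @^-1` (u @^-1` U) = d i @^-1` U.
    by apply/seteqP; split=> a /=; rewrite uc.
  by move/continuousP : (dc i); apply.
- move=> u' [_ u'c]; apply: funext => w; have [i [a ->]] := c_surj w.
  by rewrite uc -(u'c i).
Qed.

End FinalCocone.

Lemma colimit_comparison C (I : Type) (le : I -> I -> Prop)
  (Z : I -> topologicalType) (z : forall i j, le i j -> Z i -> Z j)
  (W W' : topologicalType) (c : forall i, Z i -> W) (c' : forall i, Z i -> W') :
  is_colimit C z c -> is_colimit C z c' ->
  exists (u : W -> W') (v : W' -> W), [/\ continuous u,
    forall i, u \o c i = c' i, forall i, v \o c' i = c i & v \o u = id].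
Proof.
move=> [oW cc cz W_univ] [oW' cc' cz' W'_univ].
have [u [[uc uE] _]] := W_univ _ oW' c' cc' cz'.
have [v [[vc vE] _]] := W'_univ _ oW c cc cz.
have [w0 [_ w0_uniq]] := W_univ _ oW c cc cz.
exists u, v; split=> //; rewrite -(w0_uniq (v \o u)) ?(w0_uniq id) //.
  by split=> // x; exact: cvg_id.
split=> [x|i]; first exact: continuous_comp (uc x) (vc _).
by rewrite -compA uE vE.
Qed.

(** * Directed unions of injections *)

Lemma compact_directed_cover (X : topologicalType) (I : Type) (U : I -> set X) :
  compact [set: X] -> (exists i : I, True) -> (forall i, open (U i)) ->
  (forall i j, exists k, U i `|` U j `<=` U k) -> (forall x, exists i, U i x) ->
  exists i, U i = setT.
Proof.
move=> cX [i0 _] oU dirU covU; apply: contrapT => noU.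
pose F := filter_from [set: I] (fun i => ~` U i).
have FF : ProperFilter F.
  apply: filter_from_proper => [|i _].
    apply: filter_from_filter => [|i j _ _]; first by exists i0.
    have [k ijk] := dirU i j; exists k => // x nUkx.
    by split=> Ux; apply: nUkx; apply: ijk; [left|right].
  apply: contrapT => /set0P/negP; rewrite negbK => /eqP nUi0.
  by apply: noU; exists i; rewrite -[U i]setCK nUi0 setC0.
have [x [_ clFx]] := cX F FF filterT.
have [i Uix] := covU x.
have Fi : F (~` U i) by exists i.
have [y [nUiy Uiy]] := clFx _ _ Fi (open_nbhs_nbhs (conj (oU i) Uix)).
exact: nUiy.
Qed.

Lemma continuous_open_embedding_comp (A B D : topologicalType)
    (g : A -> B) (e : B -> D) :
  open_embedding e -> continuous (e \o g) -> continuous g.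
Proof.
move=> [ie _ oe] /continuousP ceg; apply/continuousP => U oU.
have -> : g @^-1` U = (e \o g) @^-1` (e @` U).
  apply/seteqP; split=> [x Ugx|x [b Ub /ie bE]]; first by exists (g x).
  by rewrite /= -bE.
exact/ceg/oe.
Qed.

Lemma obj_open_embedding_cover C (W : topologicalType) :
  (forall w1 w2 : W, exists (S : topologicalType) (e : S -> W) (a b : S),
     [/\ obj C S, open_embedding e, w1 = e a & w2 = e b]) -> obj C W.
Proof.
move=> Wcov; case: C Wcov => //= Wcov.
- apply/hausdorffP => w1 w2 w12.
  have [S [e [a [b [/hausdorffP oS [ie _ oe] E1 E2]]]]] := Wcov w1 w2; subst w1 w2.
  have [|A [B [oA oB Aa Bb AB]]] := oS a b; first by move=> ab; apply: w12; rewrite ab.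
  exists (e @` A), (e @` B); split; [exact: oe|exact: oe|by exists a|by exists b|].
  apply/disjoints_subset => _ [a' Aa' <-] [b' Bb' /ie E].
  by move/disjoints_subset : AB => /(_ a' Aa'); rewrite -E.
- apply/accessibleP => w1 w2 w12.
  have [S [e [a [b [/accessibleP oS [ie _ oe] E1 E2]]]]] := Wcov w1 w2; subst w1 w2.
  have [|A [oA Aa Ab]] := oS a b; first by move=> ab; apply: w12; rewrite ab.
  exists (e @` A); split; [exact: oe|by exists a|].
  by move=> [a' Aa' /ie E]; rewrite -E in Ab.
- apply/kolmogorovP => w1 w2 w12.
  have [S [e [a [b [/kolmogorovP oS [ie _ oe] E1 E2]]]]] := Wcov w1 w2; subst w1 w2.
  have [|A [oA abA]] := oS a b; first by move=> ab; apply: w12; rewrite ab.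
  exists (e @` A); split; first exact: oe.
  have eA x : (e @` A) (e x) <-> A x by split=> [[x' Ax' /ie <-]|Ax] //; exists x.
  by rewrite !eA.
Qed.

Section DirectedUnion.
Variables (I : Type) (le : I -> I -> Prop) (Z : I -> topologicalType).
Variable z : forall i j, le i j -> Z i -> Z j.
Arguments z : clear implicits.
Hypothesis le_directed : directed_poset le.
Hypothesis z_id : forall i (h : le i i), z i i h = id.
Hypothesis z_comp : forall i j k (hij : le i j) (hjk : le j k) (hik : le i k),
  z j k hjk \o z i j hij = z i k hik.
Hypothesis z_inj : forall i j (h : le i j), injective (z i j h).
Hypothesis z_cont : forall i j (h : le i j), continuous (z i j h).

Let le_refl i : le i i. Proof. by case: le_directed. Qed.

Let le_ub i j : exists k, le i k /\ le j k.
Proof.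
case: le_directed => _ _ _ /(_ [:: i; j]) [k ijk].
by exists k; split; apply: ijk => /=; auto.
Qed.

Let z_compE i j k (hij : le i j) (hjk : le j k) (hik : le i k) a :
  z j k hjk (z i j hij a) = z i k hik a.
Proof. exact: (congr1 (fun f => f a) (z_comp hij hjk hik)). Qed.

Let z_irr i k (h h' : le i k) : z i k h = z i k h'.
Proof. by rewrite -(z_comp h (le_refl k) h') z_id. Qed.

Definition union_rel (p q : {i & Z i}) : Prop :=
  exists k (hp : le (projT1 p) k) (hq : le (projT1 q) k),
    z _ _ hp (projT2 p) = z _ _ hq (projT2 q).

Let union_rel_refl p : union_rel p p.
Proof. by exists (projT1 p), (le_refl _), (le_refl _). Qed.

Let union_rel_sym p q : union_rel p q -> union_rel q p.
Proof. by move=> [k [hp [hq E]]]; exists k, hq, hp. Qed.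

Let union_rel_trans p q r : union_rel p q -> union_rel q r -> union_rel p r.
Proof.
move=> [k [hp [hq E]]] [k' [hq' [hr E']]].
have [m [km k'm]] := le_ub k k'.
have [hpm hqm hrm] : [/\ le (projT1 p) m, le (projT1 q) m & le (projT1 r) m].
  by case: le_directed => _ _ t _; split; apply: t; eassumption.
exists m, hpm, hrm.
by rewrite -(z_compE hp km) -(z_compE hr k'm) E -E' !z_compE.
Qed.

Definition union_carrier := {S : set {i & Z i} | exists p, S = union_rel p}.

Definition union_class (p : {i & Z i}) : union_carrier :=
  exist _ (union_rel p) (ex_intro _ p erefl).

Let union_class_eq p q : union_class p = union_class q <-> union_rel p q.
Proof.
split=> [/(congr1 (fun S => sval S q)) /= ->|pq]; first exact: union_rel_refl.
apply: eq_sig_hprop => [S ? ?|/=]; first exact: Prop_irrelevance.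
apply/funext => r; apply/propext; split; last exact: union_rel_trans.
by apply: union_rel_trans; exact: union_rel_sym.
Qed.

Definition union_open (U : set union_carrier) :=
  forall i, open ((fun a : Z i => union_class (existT _ i a)) @^-1` U).

Lemma union_open_axioms : open_axioms union_open.
Proof.
split=> [i|A B oA oB i|J f hf i]; first exact: openT.
- by rewrite preimage_setI; exact: openI.
- by rewrite preimage_bigcup; apply: bigcup_open => j _; exact: hf.
Qed.

Definition union_space := topology_of union_open_axioms.

Definition union_incl i (a : Z i) : union_space := union_class (existT _ i a).
Arguments union_incl : clear implicits.

Lemma union_openE (U : set union_space) :
  open U = forall i, open (union_incl i @^-1` U).
Proof. by []. Qed.

Lemma union_incl_continuous i : continuous (union_incl i).
Proof. by apply/continuousP => U; apply. Qed.

Lemma union_incl_cocone i j (h : le i j) : union_incl j \o z i j h = union_incl i.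
Proof.
apply: funext => a; apply/union_class_eq.
by exists j, (le_refl j), h; rewrite /= z_id.
Qed.

Lemma union_incl_coconeE i j (h : le i j) a :
  union_incl j (z i j h a) = union_incl i a.
Proof. exact: (congr1 (fun f => f a) (union_incl_cocone h)). Qed.

Lemma union_incl_inj i : injective (union_incl i).
Proof.
move=> a b /union_class_eq [k [h1 [h2 /= E]]].
by apply: (@z_inj i k h1); rewrite E (z_irr h2 h1).
Qed.

Lemma union_incl_surj (w : union_space) : exists i a, w = union_incl i a.
Proof.
case: w => S [[i a] SE]; exists i, a.
by apply: eq_sig_hprop => [? ? ?|//]; exact: Prop_irrelevance.
Qed.

Lemma union_incl_eq i j a b : union_incl i a = union_incl j b ->
  exists k (hi : le i k) (hj : le j k), z i k hi a = z j k hj b.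
Proof. by move/union_class_eq. Qed.

Lemma union_is_colimit C : obj C union_space -> is_colimit C z union_incl.
Proof.
move=> oU; apply: final_cocone_is_colimit => //.
- exact: union_incl_surj.
- exact: union_incl_continuous.
- exact: union_incl_cocone.
- exact: union_incl_eq.
Qed.

Lemma union_incl_common (w1 w2 : union_space) :
  exists k a b, w1 = union_incl k a /\ w2 = union_incl k b.
Proof.
have [i [a ->]] := union_incl_surj w1; have [j [b ->]] := union_incl_surj w2.
have [k [ik jk]] := le_ub i j.
by exists k, (z i k ik a), (z j k jk b); rewrite !union_incl_coconeE.
Qed.

Lemma union_incl_open :
  (forall i j (h : le i j) (U : set (Z i)), open U -> open (z i j h @` U)) ->
  forall k (U : set (Z k)), open U -> open (union_incl k @` U).
Proof.
move=> z_open k U oU; rewrite union_openE => l; apply: open_of_open_nbhs.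
move=> a [b Ub /esym/union_incl_eq [m [hl [hk E]]]].
exists (z l m hl @^-1` (z k m hk @` U)); last first.
  move=> a' [b' Ub' E']; exists b' => //.
  by rewrite -(union_incl_coconeE hk) -(union_incl_coconeE hl) E'.
split; last by rewrite /= E; exists b.
by move/continuousP : (@z_cont l m hl); apply; exact: z_open.
Qed.

Lemma union_obj_open_embedding C :
  (forall i j (h : le i j), open_embedding (z i j h)) ->
  (forall i, obj C (Z i)) -> obj C union_space.
Proof.
move=> z_oe oZ; apply: obj_open_embedding_cover => w1 w2.
have [k [a [b [E1 E2]]]] := union_incl_common w1 w2.
exists (Z k), (union_incl k), a, b; split=> //; split.
- exact: union_incl_inj.
- exact: union_incl_continuous.
- by apply: union_incl_open => i j h; case: (z_oe i j h).
Qed.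

Lemma union_accessible :
  (forall i, accessible_space (Z i)) -> accessible_space union_space.
Proof.
move=> Z_T1; apply/accessibleP => w1 w2 w12.
exists (~` [set w2]); split=> [|//|/(_ erefl)//]; rewrite union_openE => l.
rewrite -preimage_setC openC; apply: (accessible_finite_set_closed.1 (Z_T1 l)).
have [[b ->]|nb] := pselect (exists b, w2 = union_incl l b).
  apply: (@sub_finite_set _ _ [set b]); last exact: finite_set1.
  by move=> a /union_incl_inj.
apply: (@sub_finite_set _ _ set0); last exact: finite_set0.
by move=> a /= E; apply: nb; exists a.
Qed.

Lemma union_factor (X : topologicalType) (h : X -> union_space) :
  compact [set: X] -> (forall i, open (h @^-1` range (union_incl i))) ->
  exists k (g : X -> Z k), h = union_incl k \o g.
Proof.
move=> cX oh.
have I0 : exists i : I, True.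
  by case: le_directed => _ _ _ /(_ nil) [k _]; exists k.
have h_dir i j : exists k, h @^-1` range (union_incl i) `|` h @^-1` range (union_incl j)
    `<=` h @^-1` range (union_incl k).
  have [k [ik jk]] := le_ub i j; exists k.
  move=> x [] [a _ E]; [exists (z i k ik a) => [//|]|exists (z j k jk a) => [//|]].
  - by rewrite union_incl_coconeE.
  - by rewrite union_incl_coconeE.
have h_cov x : exists i, (h @^-1` range (union_incl i)) x.
  have [i [a E]] := union_incl_surj (h x).
  by exists i, a; [|exact: esym E].
have [k hk] := compact_directed_cover cX I0 oh h_dir h_cov.
have /choice [g gE] : forall x, exists b, union_incl k b = h x.
  by move=> x; have : setT x by []; rewrite -hk => -[b _ E]; exists b.
by exists k, g; apply: funext => x; rewrite /= gE.
Qed.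

Lemma union_fg_condition C (W : topologicalType) (c : forall i, Z i -> W)
    (X : topologicalType) :
  is_colimit C z c -> obj C union_space ->
  (forall h : X -> union_space, continuous h ->
     exists k (g : X -> Z k), continuous g /\ h = union_incl k \o g) ->
  fg_condition z c X.
Proof.
move=> Wcol oU Xfactor.
have [u [v [uc uE vE vu]]] := colimit_comparison Wcol (union_is_colimit oU).
move=> f fc; split.
- have [k [g [gc hE]]] := Xfactor (u \o f) (fun x => continuous_comp (fc x) (uc _)).
  by exists k, g; split=> //; rewrite -vE -compA -hE compA vu.
- move=> i g g' _ _ -> E; exists i, (le_refl i); rewrite z_id.
  apply: funext => x; apply: (@union_incl_inj i).
  rewrite -(uE i) /=; exact: (congr1 (fun F => u (F x)) E).
Qed.

End DirectedUnion.
Arguments union_incl {I le Z} z i.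

Lemma compact_fin_generated_open_embedding C (X : topologicalType) :
  compact [set: X] -> fin_generated C open_embedding X.
Proof.
move=> cX I le Z z W c dir [oZ z_oe z_id z_comp] Wcol.
have z_inj i j h : injective (z i j h) by case: (z_oe i j h) => _ [].
have z_cont i j h : continuous (z i j h) by case: (z_oe i j h).
have z_open i j h : forall U, open U -> open (z i j h @` U).
  by case: (z_oe i j h) => _ [].
have incl_open := union_incl_open dir z_id z_comp z_cont z_open.
apply: (union_fg_condition dir z_id z_comp z_inj Wcol).
  by apply: union_obj_open_embedding => // i j h; case: (z_oe i j h).
move=> h hc; have [|k [g hE]] := union_factor dir z_id z_comp cX (h := h).
  by move=> i; move/continuousP : hc; apply; apply: incl_open; exact: openT.
exists k, g; split=> //; apply: (continuous_open_embedding_comp (e := union_incl z k)).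
  split; [exact: (union_incl_inj dir z_id z_comp z_inj)|exact: union_incl_continuous|].
  exact: incl_open.
by rewrite -hE.
Qed.

Lemma compact_discrete_fin_generated_mono C (X : topologicalType) :
  C = TopC \/ C = Top1C -> compact [set: X] -> (forall A : set X, open A) ->
  fin_generated C (mono C) X.
Proof.
move=> CE cX Xdisc I le Z z W c dir [oZ z_mono z_id z_comp] Wcol.
have z_inj i j h : injective (z i j h) by case: (z_mono i j h) => _ /monoP [].
apply: (union_fg_condition dir z_id z_comp z_inj Wcol).
  by case: CE oZ => -> oZ //=; exact: union_accessible.
move=> h _; have [|k [g ->]] := union_factor dir z_id z_comp cX (h := h).
  by move=> i; exact: Xdisc.
by exists k, g; split=> //; apply/continuousP => U _; exact: Xdisc.
Qed.

(** * Finitely small spaces are compact *)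

Lemma not_compact_open_cover (X : topologicalType) : ~ compact [set: X] ->
  exists O : X -> set X, [/\ forall x, open (O x), forall x, O x x &
    forall S : set X, finite_set S -> exists x, forall y, S y -> ~ O y x].
Proof.
move=> /existsNP [F /not_implyP [FF /not_implyP [_ noclF]]].
have /choice [AO AOP] : forall x, exists AO : set X * set X,
    [/\ F AO.1, open AO.2, AO.2 x & forall y, AO.1 y -> ~ AO.2 y].
  move=> x; have /existsNP [A /existsNP [B /not_implyP [FA /not_implyP [+ AB]]]] :
      ~ cluster F x by move=> clx; apply: noclF; exists x.
  rewrite nbhsE => -[B' [oB' B'x] B'B]; exists (A, B'); split=> // y Ay B'y.
  by apply: AB; exists y; split=> //; exact: B'B.
exists (fun x => (AO x).2); split=> [x|x|S /finite_fsetP [D ->]]; [by case: (AOP x)..|].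
have AO1 y : F (AO y).1 by case: (AOP y).
have [x Dx] := filter_ex (filter_bigI (D := D) FF (fun y _ => AO1 y)).
exists x => y Dy.
by case: (AOP y) => _ _ _; apply; exact: Dx.
Qed.

Section WellOrder.
Variable T : eqType.

Definition wo : rel T := sval (well_ordering_principle T).

Lemma wo_minimum (P : set T) : (exists x, P x) -> exists m,
  [/\ P m, forall y, P y -> wo m y &
      forall m', P m' -> (forall y, P y -> wo m' y) -> m' = m].
Proof.
move=> [x Px]; have Pne : nonempty [pred y | `[< P y >]].
  by exists x; rewrite inE.
have [m [[+ mlow] muniq]] := svalP (well_ordering_principle T) _ Pne.
rewrite inE => Pm; exists m; split=> // [y Py|m' Pm' m'low].
  by apply: mlow; rewrite inE.
apply/esym/muniq; split=> [|y]; first by rewrite inE.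
by rewrite inE; exact: m'low.
Qed.

Lemma wo_refl x : wo x x.
Proof. by have [m [-> mlow _]] := wo_minimum (ex_intro _ x (erefl x)); exact: mlow. Qed.

Lemma wo_total x y : wo x y \/ wo y x.
Proof.
have [m [[->|->] mlow _]] := wo_minimum (ex_intro [set x; y] x (or_introl erefl)).
- by left; apply: mlow; right.
- by right; apply: mlow; left.
Qed.

Lemma wo_anti x y : wo x y -> wo y x -> x = y.
Proof.
move=> xy yx.
have [m [_ _ muniq]] := wo_minimum (ex_intro [set x; y] x (or_introl erefl)).
have xm : x = m by apply: muniq => [|w [->|->]]; [left|exact: wo_refl|exact: xy].
have ym : y = m by apply: muniq => [|w [->|->]]; [right|exact: yx|exact: wo_refl].
by rewrite xm ym.
Qed.

Lemma wo_trans x y w : wo x y -> wo y w -> wo x w.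
Proof.
move=> xy yw; pose P v := [\/ v = x, v = y | v = w].
have [m [mP mlow _]] := @wo_minimum P (ex_intro _ x (Or31 _ _ erefl)).
case: mP => mE; subst m.
- exact: mlow (Or33 _ _ erefl).
- by rewrite (wo_anti xy (mlow x (Or31 _ _ erefl))).
- by rewrite -(wo_anti yw (mlow y (Or32 _ _ erefl))).
Qed.

Lemma wo_well_founded : well_founded (strict wo).
Proof.
move=> x; apply: contrapT => nAx.
have [m [nAm mlow _]] := wo_minimum (ex_intro (fun y => ~ Acc (strict wo) y) x nAx).
apply: nAm; constructor => y [ym nym]; apply: contrapT => nAy.
exact/nym/wo_anti/(mlow y nAy).
Qed.

End WellOrder.

Section NonCompactChain.
Variables (C : spcat) (M : morclass) (X : topologicalType).
Arguments M : clear implicits.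
Hypothesis X_obj : obj C X.
Hypothesis M_open_embedding :
  forall (A B : topologicalType) (f : A -> B), open_embedding f -> M A B f.
Variable O : X -> set X.
Hypotheses (O_open : forall x, open (O x)) (O_self : forall x, O x x).
Hypothesis O_nofin :
  forall S : set X, finite_set S -> exists x, forall y, S y -> ~ O y x.

Local Notation lt := (strict (@wo X)).

(* [None] is an index above all points of [X]. *)
Definition lies_below (l : option X) (y : X) : Prop :=
  if l is Some l then lt y l else True.

Definition segment (l : option X) : set X := \bigcup_(y in lies_below l) O y.

Definition finitely_covered (l : option X) : Prop :=
  exists2 S, finite_set S & [set: X] `<=` segment l `|` \bigcup_(y in S) O y.

Lemma least_finitely_covered : exists l, finitely_covered l /\
  forall y, lies_below l y -> ~ finitely_covered (Some y).
Proof.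
have [[y cy]|] := pselect (exists y, finitely_covered (Some y)).
  have [m [cm mlow _]] :=
    @wo_minimum _ (fun y => finitely_covered (Some y)) (ex_intro _ y cy).
  exists (Some m); split=> // x [xm nxm] cx.
  exact/nxm/wo_anti/mlow.
move=> nc; exists None; split=> [|y _ cy]; last by apply: nc; exists y.
by exists set0 => [|x _]; [exact: finite_set0|left; exists x].
Qed.

Variables (l : option X) (S : set X).
Hypothesis S_fin : finite_set S.
Hypothesis lS_cover : [set: X] `<=` segment l `|` \bigcup_(y in S) O y.
Hypothesis l_least : forall y, lies_below l y -> ~ finitely_covered (Some y).

Definition stage_index := {y : X | lies_below l y}.
Definition stage_le (a b : stage_index) : Prop := wo (sval a) (sval b).
Definition stage (a : stage_index) : set X :=
  segment (Some (sval a)) `|` \bigcup_(y in S) O y.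

Lemma stage_ltE a b : strict stage_le a b <-> lt (sval a) (sval b).
Proof.
by split=> -[ab nab]; split=> // E; apply: nab; [exact: sval_inj|rewrite E].
Qed.

Lemma lies_below_trans y z : lt y z -> lies_below l z -> lies_below l y.
Proof.
case: l => //= l' [yz nyz] [zl nzl]; split; first exact: wo_trans yz zl.
by move=> E; subst l'; exact/nyz/wo_anti.
Qed.

Lemma stage_open a : open (stage a).
Proof.
by apply: openU; apply: bigcup_open => y _; exact: O_open.
Qed.

Lemma stage_mono a b : stage_le a b -> stage a `<=` stage b.
Proof.
move=> ab x [[y [yb nyb] Oyx]|Sx]; [left|by right].
exists y => //; split; first exact: wo_trans ab.
by move=> E; apply: nyb; rewrite E in yb *; exact: wo_anti.
Qed.

Lemma stage_proper a : ~ ([set: X] `<=` stage a).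
Proof. by move=> cover_a; apply: (l_least (svalP a)); exists S. Qed.

Lemma stage_index_inhabited : exists a : stage_index, True.
Proof.
apply: contrapT => noa; have [x nOx] := O_nofin S_fin.
have [[y ly Oyx]|[y Sy Oyx]] := lS_cover (I : setT x); last exact: nOx y Sy Oyx.
by apply: noa; exists (exist _ y ly).
Qed.

Lemma stage_index_unbounded (a : stage_index) :
  exists b : stage_index, lt (sval a) (sval b).
Proof.
apply: contrapT => noab; apply: (l_least (svalP a)).
exists (sval a |` S); first by rewrite finite_setU; split=> //; exact: finite_set1.
move=> x /lS_cover [[y ly Oyx]|[y Sy Oyx]]; last by right; exists y => //; right.
have [ya|nya] := pselect (y = sval a); first by right; exists y => //; left.
left; exists y => //; split=> //; have [//|ay] := wo_total y (sval a).
by exfalso; apply: noab; exists (exist _ y ly); split=> // E; apply: nya.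
Qed.

Lemma stage_cover x : exists a, stage a x.
Proof.
have [[y ly Oyx]|[y Sy Oyx]] := lS_cover (I : setT x).
  have [b yb] := stage_index_unbounded (exist _ y ly).
  by exists b; left; exists y.
by have [a _] := stage_index_inhabited; exists a; right; exists y.
Qed.

Lemma stage_limit j : is_limit_elt stage_le j ->
  forall x, stage j x -> exists a, strict stage_le a j /\ stage a x.
Proof.
move=> [[a0 a0j] jlim] x [[y yj Oyx]|Sx]; last by exists a0; split=> //; right.
pose b : stage_index := exist _ y (lies_below_trans yj (svalP j)).
have [k [bk kj]] := jlim b (proj2 (stage_ltE b j) yj).
by exists k; split=> //; left; exists y => //; exact: (stage_ltE b k).1 bk.
Qed.

Lemma stage_limit_ordinal : limit_ordinal_type stage_le.
Proof.
split; first by move=> a; exact: wo_refl.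
split; first by move=> a b ab ba; apply: sval_inj; exact: wo_anti.
split; first by move=> a b c; exact: wo_trans.
split; first by move=> a b; exact: wo_total.
split.
  suff acc y : Acc lt y ->
      forall a : stage_index, sval a = y -> Acc (strict stage_le) a.
    by move=> a; exact: acc _ (wo_well_founded _) a erefl.
  elim=> {}y _ IH a ay; constructor => b /stage_ltE; rewrite ay => ba.
  exact: IH ba _ erefl.
split; first exact: stage_index_inhabited.
by move=> a; have [b ab] := stage_index_unbounded a; exists b; apply/stage_ltE.
Qed.

Definition stage_space (a : stage_index) : topologicalType := stage a.

Definition stage_map a b (h : stage_le a b) : stage_space a -> stage_space b :=
  subset_incl (stage_mono h).

Lemma stage_diagram : diagram C M stage_map.
Proof.
split=> [a|a b h|a h|a b c h1 h2 h3]; first exact: obj_subspace.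
- have oe := open_embedding_subset_incl (stage_mono h) (stage_open a).
  by split; [case: oe|exact: M_open_embedding].
- by apply: funext => p; exact: val_inj.
- by apply: funext => p; exact: val_inj.
Qed.

Lemma stage_cocone_is_colimit (J : Type) (f : J -> stage_index) (T : topologicalType)
    (e : T -> X) (c : forall a, stage_space (f a) -> T) :
  obj C T -> open_embedding e -> (forall a, e \o c a = val) ->
  (forall t, exists a, stage (f a) (e t)) ->
  is_colimit C (fun a b (h : stage_le (f a) (f b)) => stage_map h) c.
Proof.
move=> oT e_oe ecE Tcov; have [e_inj e_cont _] := e_oe.
have c_oe a : open_embedding (c a).
  apply: (open_embedding_comp_inj _ e_cont e_inj); last first.
    by rewrite ecE; exact/open_embedding_val/stage_open.
  apply: (continuous_open_embedding_comp e_oe).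
  by rewrite ecE; exact: initial_continuous.
have ecE' a p : e (c a p) = val p by exact: (congr1 (fun F => F p) (ecE a)).
have c_surj t : exists a p, t = c a p.
  have [a Sat] := Tcov t; exists a, (exist _ (e t) (mem_set Sat)).
  by apply: e_inj; rewrite ecE'.
apply: final_cocone_is_colimit => //.
- by move=> a; case: (c_oe a).
- by move=> a b h; apply: funext => p; apply: e_inj; rewrite /= !ecE'.
- move=> a b p q /(congr1 e); rewrite !ecE' => pq.
  have [ab|ba] := wo_total (sval (f a)) (sval (f b)).
  + by exists b, ab, (wo_refl _); apply: val_inj.
  + by exists a, (wo_refl _), ba; apply: val_inj.
- by apply: open_cocone_final => // a; case: (c_oe a).
Qed.

Lemma stage_continuous_chain : continuous_chain C stage_map.
Proof.
move=> j lj.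
refine (@stage_cocone_is_colimit (below stage_le j) sval (stage_space j) val _ _ _ _ _).
- exact: obj_subspace.
- exact/open_embedding_val/stage_open.
- by [].
- move=> t; have [a [aj Sat]] := stage_limit lj (set_valP t).
  by exists (exist _ a aj).
Qed.

Lemma stage_colimit : is_colimit C stage_map (fun a => val : stage_space a -> X).
Proof.
refine (@stage_cocone_is_colimit stage_index id X id (fun a => val)
  X_obj _ _ stage_cover).
- by split=> [x y //|x|U oU]; [exact: cvg_id|rewrite image_id].
- by [].
Qed.

Lemma noncompact_not_fin_small : ~ fin_small C M X.
Proof.
move=> Xsmall; have Xid : continuous (@id X) by move=> x; exact: cvg_id.
have [[i [g [_ gE]]] _] := Xsmall _ _ _ _ _ _ stage_limit_ordinal stage_diagram
  stage_continuous_chain stage_colimit id Xid.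
apply: (@stage_proper i) => x _; rewrite (congr1 (fun F => F x) gE).
exact: set_valP.
Qed.

End NonCompactChain.

Lemma fin_small_compact C M (X : topologicalType) : obj C X ->
  (forall (A B : topologicalType) (f : A -> B), open_embedding f -> M A B f) ->
  fin_small C M X -> compact [set: X].
Proof.
move=> oX M_oe Xsmall; apply: contrapT => /not_compact_open_cover [O [Oo Ox Onofin]].
have [l [[S Sfin lS] l_least]] := least_finitely_covered Ox.
exact: (noncompact_not_fin_small oX M_oe Oo Onofin Sfin lS l_least Xsmall).
Qed.

(** * Chains of topologies on a fixed set *)

Definition nat_le (m n : nat) : Prop := (m <= n)%N.

Lemma nat_le_ltE m n : strict nat_le m n <-> (m < n)%N.
Proof.
rewrite /strict /nat_le ltn_neqAle; split=> [[mn mNn]|/andP [mNn mn]].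
  by apply/andP; split=> //; apply/eqP.
by split=> // mEn; rewrite mEn eqxx in mNn.
Qed.

Lemma nat_le_limit_ordinal : limit_ordinal_type nat_le.
Proof.
split; first exact: leqnn.
split; first by move=> m n mn nm; apply/eqP; rewrite eqn_leq; apply/andP.
split; first by move=> m n p; exact: leq_trans.
split; first by move=> m n; case: (leqP m n) => h; [left|right; exact: ltnW].
split.
  suff acc n m : (m < n)%N -> Acc (strict nat_le) m.
    by move=> m; exact: (acc m.+1 m (ltnSn m)).
  elim: n m => [|n IH] m; first by rewrite ltn0.
  rewrite ltnS => mn; constructor => k /nat_le_ltE km.
  exact/IH/(leq_trans km).
split; first by exists 0%N.
by move=> m; exists m.+1; apply/nat_le_ltE.
Qed.

Lemma nat_le_not_limit n : ~ is_limit_elt nat_le n.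
Proof.
case: n => [|n] [[m /nat_le_ltE]] //.
move=> _ /(_ n (proj2 (nat_le_ltE _ _) (ltnSn n))) [k [/nat_le_ltE nk /nat_le_ltE kn]].
by move: (leq_trans nk kn); rewrite ltnn.
Qed.

Section TopologyChain.
Variables (C : spcat) (Y : Type) (op : nat -> set (set Y)).
Hypothesis op_top : forall n, open_axioms (op n).
Hypothesis op_antitone : forall m n U, (m <= n)%N -> op n U -> op m U.

Definition chain_space n : topologicalType := topology_of (op_top n).

Lemma chain_openE n (U : set (chain_space n)) : open U = op n U.
Proof. by []. Qed.

Definition chain_map m n (_ : nat_le m n) : chain_space m -> chain_space n := id.

Lemma chain_diagram : (forall n, obj C (chain_space n)) -> diagram C (mono C) chain_map.
Proof.
move=> oZ; split=> // m n mn; have cmn : continuous (chain_map mn).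
  by apply/continuousP => U; exact: op_antitone.
by split=> //; apply/monoP.
Qed.

(* [c] exhibits [W] as the reflection into [C] of [Y] with the meet of the
   topologies [op n]. *)
Definition chain_reflection (W : topologicalType) (c : Y -> W) : Prop :=
  [/\ obj C W, forall n U, open U -> op n (c @^-1` U),
      forall U : set W, (forall n, op n (c @^-1` U)) -> open U,
      forall w, exists y, c y = w
    & forall V : topologicalType, obj C V -> forall d : Y -> V,
        (forall n U, open U -> op n (d @^-1` U)) ->
        forall y y', c y = c y' -> d y = d y'].

Lemma chain_is_colimit (W : topologicalType) (c : Y -> W) :
  chain_reflection c -> is_colimit C chain_map (fun n => c : chain_space n -> W).
Proof.
move=> [oW c_cont c_final c_surj c_univ]; split=> // [n|V oV d d_cont d_cocone].
  by apply/continuousP; exact: c_cont.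
have dE n : (d n : Y -> V) = d 0%N by have := d_cocone 0%N n (leq0n n).
have d_open n U : open U -> op n (d 0%N @^-1` U).
  by rewrite -(dE n); move/continuousP : (d_cont n); apply.
have /choice [s sE] := c_surj.
exists (fun w => d 0%N (s w)); split.
- split=> [|n]; last first.
    by apply: funext => y /=; rewrite dE; apply: (c_univ V oV _ d_open); rewrite sE.
  apply/continuousP => U oU; apply: c_final => n.
  have -> : c @^-1` ((fun w => d 0%N (s w)) @^-1` U) = d 0%N @^-1` U.
    by apply/seteqP; split=> y /=; rewrite (c_univ V oV _ d_open _ _ (sE (c y))).
  exact: d_open.
- move=> u [_ uE]; apply: funext => w; rewrite -(sE w) /=.
  rewrite (c_univ V oV _ d_open _ _ (sE (c (s w)))).
  by rewrite -(uE 0%N).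
Qed.

Hypothesis chain_obj : forall n, obj C (chain_space n).

Lemma chain_fg_condition (X W : topologicalType) (c : Y -> W) :
  fin_small C (mono C) X -> chain_reflection c ->
  fg_condition chain_map (fun n => c : chain_space n -> W) X.
Proof.
move=> Xsmall cW; apply: Xsmall; [exact: nat_le_limit_ordinal|exact: chain_diagram|..].
- by move=> n /nat_le_not_limit.
- exact: chain_is_colimit.
Qed.

Lemma chain_collapse (X W : topologicalType) (c : Y -> W) (a b : Y) :
  fin_small C (mono C) X -> chain_reflection c -> c a = c b -> a <> b -> X -> False.
Proof.
move=> Xsmall cW cab ab x; pose Z0 := chain_space 0.
have [_ uniq] := chain_fg_condition Xsmall cW (@cst_continuous X W (c a)).
have := uniq 0%N (fun=> a) (fun=> b) (@cst_continuous X Z0 a)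
  (@cst_continuous X Z0 b) erefl.
rewrite cab => /(_ erefl) [n [h E]].
exact/ab/(congr1 (fun f => f x) E).
Qed.

Definition chain_meet : topologicalType := topology_of (open_axioms_bigcap op_top).

Lemma chain_meetE (U : set chain_meet) : open U = forall n, op n U.
Proof. by []. Qed.

Lemma chain_meet_factor (X : topologicalType) (f : X -> chain_meet) :
  fin_small C (mono C) X -> obj C chain_meet -> continuous f ->
  exists n, continuous (f : X -> chain_space n).
Proof.
move=> Xsmall oM fc.
have cM : chain_reflection (id : Y -> chain_meet).
  by split=> [//|n U oU|U oU //|w|V _ d _ y y' -> //]; [exact: oU|exists w].
have [[n [g [gc fE]]] _] := chain_fg_condition Xsmall cM fc.
by exists n; rewrite fE.
Qed.

End TopologyChain.

(** * Monomorphisms in Top: points are open *)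

Section GlueChain.
Variables (X : topologicalType) (p : X).

(* At stage [n] an open set containing [inr m], [m < n], contains a
   neighbourhood of [p] in [X], and an open set containing [inl p] contains
   almost all [inr m].  Hence [inl] is continuous into the meet, but into a
   stage only if [p] is isolated. *)
Definition glue_chain_open (n : nat) (U : set (X + nat)) : Prop :=
  [/\ forall x, U (inl x) -> x <> p -> nbhs x (inl @^-1` U),
      U (inl p) -> \forall m \near \oo, U (inr m)
    & forall m, (m < n)%N -> U (inr m) -> nbhs p (inl @^-1` U)].

Lemma glue_chain_axioms n : open_axioms (glue_chain_open n).
Proof.
split.
- by split=> [x _ _|_|m _ _]; exact: filterT.
- move=> A B [A1 A2 A3] [B1 B2 B3]; rewrite /glue_chain_open preimage_setI.
  split=> [x [Ax Bx] xp|[/A2 A2' /B2 B2']|m mn [Am Bm]]; apply: filterI => //.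
  + exact: A1.
  + exact: B1.
  + exact: A3 mn Am.
  + exact: B3 mn Bm.
- move=> I f hf; split=> [x [i _ fx] xp|[i _ fp]|m mn [i _ fm]].
  + by case: (hf i) => + _ _ => /(_ x fx xp); apply: filterS => y fy; exists i.
  + by case: (hf i) => _ /(_ fp) + _; apply: filterS => m fm; exists i.
  + by case: (hf i) => _ _ /(_ m mn fm); apply: filterS => y fy; exists i.
Qed.

Lemma glue_chain_antitone m n U :
  (m <= n)%N -> glue_chain_open n U -> glue_chain_open m U.
Proof. by move=> mn [H1 H2 H3]; split=> // k km; apply: H3; exact: leq_trans mn. Qed.

Lemma fin_small_Top_open_set1 : fin_small TopC (mono TopC) X -> open [set p].
Proof.
move=> Xsmall.
pose M := chain_meet glue_chain_axioms.
have inl_cont : continuous (inl : X -> M).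
  apply/continuousP => U oU; rewrite openE => x Ux.
  have [H1 H2 _] := oU 0%N; have [xp|xp] := pselect (x = p); last exact: H1.
  subst x; have [m Um] := filter_ex (H2 Ux).
  by have [_ _ /(_ m (ltnSn m) Um)] := oU m.+1.
have [n inl_n] := @chain_meet_factor TopC _ _ _ glue_chain_antitone (fun _ => I) X _
  Xsmall I inl_cont.
pose U0 (y : X + nat) := if y is inr m then (n <= m)%N else y = inl p.
have oU0 : glue_chain_open n U0.
  split=> [x /= [->] //|_|m mn nm]; first exact: nbhs_infty_ge.
  by move: (leq_ltn_trans nm mn); rewrite ltnn.
have -> : [set p] = inl @^-1` U0 by apply/seteqP; split=> x /= => [->|[->]].
by move/continuousP : inl_n; apply.
Qed.

End GlueChain.

Lemma fin_small_Top_discrete (X : topologicalType) :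
  fin_small TopC (mono TopC) X -> forall A : set X, open A.
Proof.
move=> Xsmall A; have -> : A = \bigcup_(x in A) [set x].
  by apply/seteqP; split=> [x Ax|x [y Ay ->]] //; exists x.
by apply: bigcup_open => x _; exact: fin_small_Top_open_set1.
Qed.

(** * Monomorphisms in Haus and Top_0: only the empty space *)

Inductive haus_point := HA | HB | HG of nat & nat.
Inductive haus_quot := HS | HQ of nat & nat.

(* In the meet of these Hausdorff topologies every neighbourhood of [HA] meets
   every neighbourhood of [HB]. *)
Definition haus_chain_open (n : nat) (U : set haus_point) : Prop :=
  (U HA -> \forall i \near \oo, forall j, U (HG i j)) /\
  (U HB -> forall i, (i < n)%N -> \forall j \near \oo, U (HG i j)).

Definition haus_quot_open (U : set haus_quot) : Prop :=
  U HS -> (\forall i \near \oo, forall j, U (HQ i j)) /\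
          (forall i, \forall j \near \oo, U (HQ i j)).

Lemma haus_chain_axioms n : open_axioms (haus_chain_open n).
Proof.
split.
- by split=> [_|_ i _]; apply: nearW.
- move=> A B [A1 A2] [B1 B2]; split=> [[/A1 Ai /B1 Bi]|[/A2 Ai /B2 Bi] i ilt].
  + by apply: filterS (filterI Ai Bi) => i [].
  + exact: filterI (Ai i ilt) (Bi i ilt).
- move=> I f hf; split=> [[k _ /(proj1 (hf k))]|[k _ /(proj2 (hf k))] fk i ilt].
  + by apply: filterS => i fi j; exists k.
  + by apply: filterS (fk i ilt) => j fj; exists k.
Qed.

Lemma haus_chain_antitone m n U :
  (m <= n)%N -> haus_chain_open n U -> haus_chain_open m U.
Proof.
by move=> mn [H1 H2]; split=> // UB i im; apply: H2 => //; exact: leq_trans mn.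
Qed.

Lemma haus_quot_axioms : open_axioms haus_quot_open.
Proof.
split.
- by split=> [|i]; apply: nearW.
- move=> A B HA' HB' [/HA' [A1 A2] /HB' [B1 B2]]; split=> [|i].
  + by apply: filterS (filterI A1 B1) => i [].
  + exact: filterI (A2 i) (B2 i).
- move=> I f hf [k _ /(hf k) [fk1 fk2]]; split=> [|i].
  + by apply: filterS fk1 => i fi j; exists k.
  + by apply: filterS (fk2 i) => j fj; exists k.
Qed.

Definition haus_quot_space : topologicalType := topology_of haus_quot_axioms.

Lemma haus_chain_hausdorff n : hausdorff_space (chain_space haus_chain_axioms n).
Proof.
have sepAB : open_separated (HA : chain_space haus_chain_axioms n) HB.
  exists (fun y => if y is HG i _ then (n <= i)%N else y = HA).
  exists (fun y => if y is HG i _ then (i < n)%N else y = HB).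
  split=> //; rewrite ?chain_openE.
  - by split=> // _; apply: filterS (nbhs_infty_ge n).
  - by split=> // _ i ilt; apply: nearW.
  - by apply/disjoints_subset => -[||i j] //= ni; rewrite ltnNge ni.
have sepAG i j : open_separated (HA : chain_space haus_chain_axioms n) (HG i j).
  exists (fun y => if y is HG i' _ then (i < i')%N else y = HA), [set HG i j].
  split=> //; rewrite ?chain_openE.
    by split=> // _; apply: filterS (nbhs_infty_gt i).
  by apply/disjoints_subset => -[||i' j'] //= ii' [E _]; rewrite E ltnn in ii'.
have sepBG i j : open_separated (HB : chain_space haus_chain_axioms n) (HG i j).
  exists (fun y => if y is HG _ j' then (j < j')%N else y = HB), [set HG i j].
  split=> //; apply/disjoints_subset => -[||i' j'] //= jj' [_ E].
  by rewrite E ltnn in jj'.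
apply/hausdorffP => -[||i j] [||i' j'] // xy; try exact: open_separated_sym.
exists [set HG i j], [set HG i' j']; split=> //.
by apply/disjoints_subset => _ -> E; apply: xy.
Qed.

Lemma haus_quot_hausdorff : hausdorff_space haus_quot_space.
Proof.
have sepSQ i j : open_separated (HS : haus_quot_space) (HQ i j).
  exists (fun w => if w is HQ i' j' then (i < i')%N \/ (j < j')%N else True).
  exists [set HQ i j]; split=> //.
    move=> _; split=> [|i'].
      by apply: filterS (nbhs_infty_gt i) => i' ii' j'; left.
    by apply: filterS (nbhs_infty_gt j) => j' jj'; right.
  apply/disjoints_subset => -[|i' j'] //= ij [E1 E2]; subst.
  by rewrite !ltnn in ij; case: ij.
apply/hausdorffP => -[|i j] [|i' j'] // xy; try exact: open_separated_sym.
exists [set HQ i j], [set HQ i' j']; split=> //.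
by apply/disjoints_subset => _ -> E; apply: xy.
Qed.

Definition haus_collapse (y : haus_point) : haus_quot_space :=
  if y is HG i j then HQ i j else HS.

Lemma haus_chain_identify (V : topologicalType) (d : haus_point -> V) :
  hausdorff_space V -> (forall n U, open U -> haus_chain_open n (d @^-1` U)) ->
  d HA = d HB.
Proof.
move=> hV d_cont; apply: hV => A B; rewrite !nbhsE.
move=> -[A' [oA' A'a] A'A] [B' [oB' B'b] B'B].
have [k Hk] := filter_ex ((d_cont 0%N _ oA').1 A'a).
have [l Hl] := filter_ex ((d_cont k.+1 _ oB').2 B'b k (ltnSn k)).
by exists (d (HG k l)); split; [exact/A'A/Hk|exact/B'B].
Qed.

Lemma haus_chain_reflection :
  chain_reflection HausC haus_chain_open haus_collapse.
Proof.
split=> [|n U oU|U U_open|[|i j]|V oV d d_cont].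
- exact: haus_quot_hausdorff.
- by split=> [/oU [H1 _]|/oU [_ H2] i _]; [exact: H1|exact: H2].
- move=> US; split; first exact: (U_open 0%N).1 US.
  by move=> i; exact: (U_open i.+1).2 US i (ltnSn i).
- by exists HA.
- by exists (HG i j).
- have dAB := haus_chain_identify oV d_cont.
  by case=> [||i j] [||i' j'] //= [-> ->].
Qed.

Lemma fin_small_Haus_empty (X : topologicalType) :
  fin_small HausC (mono HausC) X -> X -> False.
Proof.
have Zobj n : obj HausC (chain_space haus_chain_axioms n).
  exact/hausdorff_obj/haus_chain_hausdorff.
move=> Xsmall; apply: (chain_collapse haus_chain_antitone Zobj Xsmall
  haus_chain_reflection (a := HA) (b := HB)) => //.
Qed.

Inductive kolmo_point := TA | TB | TN of nat.
Inductive kolmo_quot := TS | TQ of nat.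

(* In the meet of these T0 topologies [TA] and [TB] have the same
   neighbourhoods. *)
Definition kolmo_chain_open (n : nat) (U : set kolmo_point) : Prop :=
  [/\ U TA -> \forall m \near \oo, U (TN m),
      forall m, (m < n)%N -> U (TN m) -> U TB
    & U TB -> U TA].

Definition kolmo_quot_open (U : set kolmo_quot) : Prop :=
  (U TS -> \forall m \near \oo, U (TQ m)) /\ (forall m, U (TQ m) -> U TS).

Lemma kolmo_chain_axioms n : open_axioms (kolmo_chain_open n).
Proof.
split.
- by split=> // _; apply: nearW.
- move=> A B [A1 A2 A3] [B1 B2 B3].
  split=> [[/A1 Am /B1 Bm]|m mn [Am Bm]|[/A3 ? /B3 ?]] //.
  + exact: filterI Am Bm.
  + by split; [exact: A2 mn Am|exact: B2 mn Bm].
- move=> I f hf; split=> [[i _ fa]|m mn [i _ fm]|[i _ fb]].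
  + by case: (hf i) => /(_ fa) + _ _; apply: filterS => m fm; exists i.
  + by case: (hf i) => _ /(_ m mn fm) fb _; exists i.
  + by case: (hf i) => _ _ /(_ fb) fa; exists i.
Qed.

Lemma kolmo_chain_antitone m n U :
  (m <= n)%N -> kolmo_chain_open n U -> kolmo_chain_open m U.
Proof.
by move=> mn [H1 H2 H3]; split=> // k km; apply: H2; exact: leq_trans mn.
Qed.

Lemma kolmo_quot_axioms : open_axioms kolmo_quot_open.
Proof.
split.
- by split=> // _; apply: nearW.
- move=> A B [A1 A2] [B1 B2]; split=> [[/A1 Am /B1 Bm]|m [/A2 ? /B2 ?]] //.
  exact: filterI Am Bm.
- move=> I f hf; split=> [[i _ fs]|m [i _ fm]].
  + by case: (hf i) => /(_ fs) + _; apply: filterS => m fm; exists i.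
  + by case: (hf i) => _ /(_ m fm) fs; exists i.
Qed.

Definition kolmo_quot_space : topologicalType := topology_of kolmo_quot_axioms.

Definition kolmo_basic_open (n : nat) (y : kolmo_point) : set kolmo_point :=
  match y with
  | TA => fun w => if w is TN m then (n <= m)%N else w = TA
  | TB => fun w => if w is TN m then (n <= m)%N else True
  | TN k => if (k < n)%N then fun w => if w is TN m then m = k \/ (n <= m)%N else True
            else [set TN k]
  end.

Lemma kolmo_basic_openP n y : kolmo_chain_open n (kolmo_basic_open n y).
Proof.
case: y => [||k] /=.
- split=> // [_|m mn nm]; first exact: nbhs_infty_ge.
  by move: (leq_ltn_trans nm mn); rewrite ltnn.
- by split=> // _; exact: nbhs_infty_ge.
- case: ifP => kn; first by split=> // _; apply: filterS (nbhs_infty_ge n) => m; right.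
  by split=> // m mn [mk]; rewrite -mk mn in kn.
Qed.

Lemma kolmo_basic_open_self n y : kolmo_basic_open n y y.
Proof. by case: y => [||k] //=; case: ifP => _ //; left. Qed.

Lemma kolmo_basic_open_sep n x y : x <> y ->
  ~ kolmo_basic_open n x y \/ ~ kolmo_basic_open n y x.
Proof.
have nle k : (k < n)%N -> ~ (n <= k)%N by move=> kn; rewrite leqNgt kn.
case: x => [||k]; case: y => [||k'] xy //=; try by [left|right].
- by case: ifP => kn; [left; exact: nle|right].
- by case: ifP => kn; [left; exact: nle|right].
- by case: ifP => kn; [right; exact: nle|left].
- by case: ifP => kn; [right; exact: nle|left].
- have kk : k <> k' by move=> E; apply: xy; rewrite E.
  case: ifP => kn; case: ifP => k'n.
  + by left=> -[E|]; [exact: kk|exact: nle].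
  + by right=> -[E]; exact: kk.
  + by left=> -[E]; exact: kk.
  + by left=> -[E]; exact: kk.
Qed.

Lemma kolmo_chain_kolmogorov n : kolmogorov_space (chain_space kolmo_chain_axioms n).
Proof.
apply/kolmogorovP => x y /(kolmo_basic_open_sep n) [nxy|nyx].
- exists (kolmo_basic_open n x); split; first exact: kolmo_basic_openP.
  by left; split=> //; exact: kolmo_basic_open_self.
- exists (kolmo_basic_open n y); split; first exact: kolmo_basic_openP.
  by right; split=> //; exact: kolmo_basic_open_self.
Qed.

Lemma kolmo_quot_kolmogorov : kolmogorov_space kolmo_quot_space.
Proof.
apply/kolmogorovP => -[|k] [|k'] // xy.
- exists (fun w => if w is TQ m then (k' < m)%N else True).
  by split; [split=> // _; exact: nbhs_infty_gt|left; split=> //=; rewrite ltnn].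
- exists (fun w => if w is TQ m then (k < m)%N else True).
  by split; [split=> // _; exact: nbhs_infty_gt|right; split=> //=; rewrite ltnn].
- have kk : k <> k' by move=> E; apply: xy; rewrite E.
  exists (fun w => if w is TQ m then m = k \/ (maxn k k' < m)%N else True).
  split; first by split=> // _; apply: filterS (nbhs_infty_gt (maxn k k')) => m; right.
  left; split=> [|[E|]]; [by left|exact: kk (esym E)|by rewrite ltnNge leq_maxr].
Qed.

Definition kolmo_collapse (y : kolmo_point) : kolmo_quot_space :=
  if y is TN m then TQ m else TS.

Lemma kolmo_chain_identify (V : topologicalType) (d : kolmo_point -> V) :
  kolmogorov_space V -> (forall n U, open U -> kolmo_chain_open n (d @^-1` U)) ->
  d TA = d TB.
Proof.
move=> /kolmogorovP kV d_cont; apply: contrapT => /kV [A [oA [[Aa nAb]|[Ab nAa]]]].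
- have [A1 _ _] := d_cont 0%N _ oA; have [k Ak] := filter_ex (A1 Aa).
  by apply: nAb; have [_ /(_ k (ltnSn k) Ak)] := d_cont k.+1 _ oA.
- by apply: nAa; have [_ _ /(_ Ab)] := d_cont 0%N _ oA.
Qed.

Lemma kolmo_chain_reflection :
  chain_reflection Top0C kolmo_chain_open kolmo_collapse.
Proof.
split=> [|n U [U1 U2]|U U_open|[|m]|V oV d d_cont].
- exact: kolmo_quot_kolmogorov.
- by split=> // m _ /U2.
- split=> [US|m Um]; first by case: (U_open 0%N) => /(_ US).
  by case: (U_open m.+1) => _ /(_ m (ltnSn m) Um).
- by exists TA.
- by exists (TN m).
- have dAB := kolmo_chain_identify oV d_cont.
  by case=> [||m] [||m'] //= [->].
Qed.

Lemma fin_small_Top0_empty (X : topologicalType) :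
  fin_small Top0C (mono Top0C) X -> X -> False.
Proof.
have Zobj n : obj Top0C (chain_space kolmo_chain_axioms n).
  exact: kolmo_chain_kolmogorov.
move=> Xsmall; apply: (chain_collapse kolmo_chain_antitone Zobj Xsmall
  kolmo_chain_reflection (a := TA) (b := TB)) => //.
Qed.

(** * Monomorphisms in Top_1: finiteness *)

Lemma infinite_injective_pairs (T : Type) : infinite_set [set: T] ->
  exists f : nat * nat -> T, injective f.
Proof.
move=> /infiniteP Tnat.
have /card_leP[f] : ([set: nat * nat] #<= [set: T])%card.
  by apply: card_le_trans Tnat; have /card_eqPle[] := card_nat2.
exists (fun p => val (f (exist _ p (mem_set I)))).
move=> p q /val_inj /(@inj _ _ _ f).
by move=> /(_ (mem_set I) (mem_set I)) /(congr1 val).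
Qed.

Section TailChain.
Variables (X : topologicalType) (a : nat * nat -> X) (y : nat -> X).
Hypothesis X_T1 : accessible_space X.
Hypothesis a_inj : injective a.
Hypothesis y_cluster : forall m, cluster ((fun k => a (m, k)) @ \oo) (y m).

Definition tail_set (m : nat) : set X := range (fun k => a (m, k)) `\` [set y m].

Lemma tail_set_disjoint m m' x : tail_set m x -> tail_set m' x -> m = m'.
Proof. by move=> [[k _ <-] _] [[k' _ /a_inj [->]]]. Qed.

Lemma tail_set_not_closed m : ~ closed (tail_set m).
Proof.
move=> cK; suff : tail_set m (y m) by move=> [_ /(_ erefl)].
apply: cK => B yB; apply: y_cluster yB.
suff : \forall k \near \oo, tail_set m (a (m, k)) by [].
have [[k0 k0E]|noy] := pselect (exists k0, a (m, k0) = y m).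
  apply: filterS (nbhs_infty_gt k0) => k k0k; split; first by exists k.
  by rewrite /= -k0E => /a_inj [E]; rewrite E ltnn in k0k.
by apply: nearW => k; split; [exists k|move=> E; apply: noy; exists k].
Qed.

(* At stage [n]
   the closed sets are [setT] and the subsets of [F `|` tail_set n `|` ... `|`
   tail_set N.-1] with [F] finite: in the meet only [setT] and the finite sets
   are closed, whereas [tail_set n] is closed at stage [n]. *)
Definition tail_chain_open (n : nat) (U : set X) : Prop := U = set0 \/
  exists F N, finite_set F /\
    ~` U `<=` F `|` \bigcup_(m in [set m | (n <= m < N)%N]) tail_set m.

Lemma tail_chain_axioms n : open_axioms (tail_chain_open n).
Proof.
split.
- by right; exists set0, 0%N; split=> [|x]; [exact: finite_set0|rewrite setCT].
- move=> A B [->|[F [N [Ffin AF]]]]; first by left; rewrite set0I.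
  move=> [->|[F' [N' [F'fin BF']]]]; first by left; rewrite setI0.
  right; exists (F `|` F'), (maxn N N'); split; first by rewrite finite_setU.
  move=> x; rewrite setCI => -[/AF|/BF'] [Fx|[m /andP [nm mN] Kmx]].
  + by left; left.
  + by right; exists m => //; rewrite /= nm (leq_trans mN) ?leq_maxl.
  + by left; right.
  + by right; exists m => //; rewrite /= nm (leq_trans mN) ?leq_maxr.
- move=> I f hf; have [f0|/existsNP [i nfi]] := pselect (forall i, f i = set0).
    by left; apply/seteqP; split=> // x [i _]; rewrite f0.
  have [fi0|[F [N [Ffin fiF]]]] := hf i; first by [].
  by right; exists F, N; split=> // x nfx; apply: fiF => fx; apply: nfx; exists i.
Qed.

Lemma tail_chain_antitone m n U :
  (m <= n)%N -> tail_chain_open n U -> tail_chain_open m U.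
Proof.
move=> mn [->|[F [N [Ffin UF]]]]; [by left|right; exists F, N; split=> // x].
move=> /UF [Fx|[k /andP [nk kN] Kkx]]; [by left|right; exists k => //].
by rewrite /= kN (leq_trans mn nk).
Qed.

Lemma tail_chain_open_cofinite n U : finite_set (~` U) -> tail_chain_open n U.
Proof. by move=> Ufin; right; exists (~` U), 0%N; split=> // x; left. Qed.

Lemma tail_meet_open (U : set X) : (forall n, tail_chain_open n U) -> open U.
Proof.
move=> oU; have [->|[F0 [N0 [F0fin UF0]]]] := oU 0%N; first exact: open0.
have [->|[F1 [N1 [F1fin UF1]]]] := oU N0; first exact: open0.
rewrite -closedC; apply: (accessible_finite_set_closed.1 X_T1).
apply: (@sub_finite_set _ _ (F0 `|` F1)); last by rewrite finite_setU.
move=> x nUx; have [F0x|[m /andP [_ mN0] Kmx]] := UF0 x nUx; first by left.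
have [F1x|[m' /andP [N0m' _] Km'x]] := UF1 x nUx; first by right.
rewrite (tail_set_disjoint Kmx Km'x) in mN0.
by move: (leq_trans mN0 N0m'); rewrite ltnn.
Qed.

Lemma tail_chain_not_fin_small : ~ fin_small Top1C (mono Top1C) X.
Proof.
move=> Xsmall.
have Zobj n : obj Top1C (chain_space tail_chain_axioms n).
  by apply: accessible_of_cofinite => U; exact: tail_chain_open_cofinite.
have Mobj : obj Top1C (chain_meet tail_chain_axioms).
  apply: accessible_of_cofinite => U Ufin; rewrite chain_meetE => n.
  exact: tail_chain_open_cofinite.
have id_cont : continuous (id : X -> chain_meet tail_chain_axioms).
  by apply/continuousP => U; exact: tail_meet_open.
have [n idn] := chain_meet_factor tail_chain_antitone Zobj Xsmall Mobj id_cont.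
apply: (@tail_set_not_closed n); rewrite -openC.
have : tail_chain_open n (~` tail_set n).
  right; exists set0, n.+1; split=> [|x]; first exact: finite_set0.
  by rewrite setCK => Knx; right; exists n; rewrite /= ?leqnn.
by move/continuousP : idn; apply.
Qed.

End TailChain.

Lemma fin_small_accessible_finite (X : topologicalType) :
  accessible_space X -> compact [set: X] -> fin_small Top1C (mono Top1C) X ->
  finite_set [set: X].
Proof.
move=> XT1 cX Xsmall; apply: contrapT => /infinite_injective_pairs [a a_inj].
have /choice [y y_cluster] : forall m, exists y, cluster ((fun k => a (m, k)) @ \oo) y.
  move=> m; have [y [_ ?]] := cX ((fun k => a (m, k)) @ \oo) _ filterT.
  by exists y.
exact: (tail_chain_not_fin_small XT1 a_inj y_cluster Xsmall).
Qed.

Lemma accessible_finite_discrete (X : topologicalType) :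
  accessible_space X -> finite_set [set: X] -> forall A : set X, open A.
Proof.
move=> XT1 Xfin A; rewrite -closedC; apply: (accessible_finite_set_closed.1 XT1).
exact: sub_finite_set Xfin.
Qed.

Theorem corollary3p2 (C : spcat) (X : topologicalType) (hX : obj C X) :
  (fin_generated C (mono C) X <-> fin_small C (mono C) X) /\
  (fin_generated C open_embedding X <-> fin_small C open_embedding X).
Proof.
split; split=> [|Xsmall]; try exact: fin_generated_small.
- have cX := fin_small_compact hX (@open_embedding_mono C) Xsmall.
  case: C hX Xsmall cX => hX Xsmall cX.
  + apply: (compact_discrete_fin_generated_mono (or_introl erefl) cX).
    exact: (fin_small_Top_discrete Xsmall).
  + exact/empty_fin_generated/(fin_small_Haus_empty Xsmall).
  + have Xfin := fin_small_accessible_finite hX cX Xsmall.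
    apply: (compact_discrete_fin_generated_mono (or_intror erefl) cX).
    exact: (accessible_finite_discrete hX Xfin).
  + exact/empty_fin_generated/(fin_small_Top0_empty Xsmall).
- apply: compact_fin_generated_open_embedding.
  exact: (fin_small_compact hX (fun _ _ _ oe => oe) Xsmall).
Qed.
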